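(* Let $m\ge3$, let $\lambda$ be a $\mathbb{Z}_2$-characteristic map over $P_m$, and let $(p,S)$ and $(q,T)$ be e-sets compatible with $\lambda$ with $S\ne\varnothing$, $T\ne\varnothing$ and $\lambda(p)\ne\lambda(q)$. Then the edges $\{\lambda,\operatorname{inv}_S\lambda,p\}$ and $\{\lambda,\operatorname{inv}_T\lambda,q\}$ span a realizable square (i.e. there is a $\mathbb{Z}_2$-characteristic map $\Lambda$ over $\mathrm{wed}_{p,q}P_m$ with $\operatorname{proj}_{\{p_2,q_2\}}\Lambda\simeq\lambda$, $\operatorname{proj}_{\{p_1,q_2\}}\Lambda\simeq\operatorname{inv}_S\lambda$, $\operatorname{proj}_{\{p_2,q_1\}}\Lambda\simeq\operatorname{inv}_T\lambda$) if and only if $\Omega_q(S)\cap\Omega_p(T)=\varnothing$.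
   Context: $P_m$: simplicial complex on $[m]$ with facets $\{i,i+1\}$ mod $m$. A $\mathbb{Z}_2$-characteristic map over $P_m$ is a map $\lambda\colon[m]\to\{\mathbf a,\mathbf b,\mathbf c\}=\mathbb{Z}_2^2\setminus\{0\}$ with $\lambda(i)\ne\lambda(i+1)$ mod $m$; $\simeq$ denotes D-J equivalence (composition with $GL(n,\mathbb{Z}_2)$). $\operatorname{supp}_\lambda p=\lambda^{-1}(\lambda(p))$. An e-set compatible with $\lambda$ is a pair $(p,S)$ with $p\in[m]$, $S\subseteq\operatorname{supp}_\lambda p$, $|S|$ even. For nonempty such $S$ (necessarily a non-consecutive set, $|S|\ge2$), the points of $S$ cut the cycle $[m]$ into $|S|$ nonempty arcs (maximal cyclic intervals of $[m]\setminus S$), which are colored alternately black and white. $\operatorname{inv}_S\lambda$ is obtained from $\lambda$ by exchanging, on every vertex of the black arcs, the two values different from $\lambda(p)$; it is well defined up to D-J equivalence (independent of the coloring); $\operatorname{inv}_\varnothing\lambda=\lambda$. For $r\in[m]\setminus S$, $\Omega_r(S)=A\cup S$ where $A$ is the union of the black arcs for the coloring in which the arc containing $r$ is white. Wedges: $\mathrm{wed}_{p,q}P_m$ has vertices $p_1,p_2,q_1,q_2$ replacing $p,q$, minimal non-faces obtained from those of $P_m$ by replacing $p$ by $p_1,p_2$ and $q$ by $q_1,q_2$ when they occur. Characteristic maps over it take values in $\mathbb{Z}_2^{m}$ (dimension $m$ complex $-1$... i.e. $\mathbb{Z}_2^4$) with faces mapped to linearly independent sets; $\operatorname{proj}_\sigma\Lambda(w)=[\Lambda(w)]$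 modulo $\langle\Lambda(v):v\in\sigma\rangle$ on the link of $\sigma$, and the link of $\{p_i,q_j\}$ is identified with $P_m$ via $p_{3-i}\mapsto p$, $q_{3-j}\mapsto q$. *)

From HB Require Import structures.
From mathcomp Require Import all_boot all_order all_algebra.
Set Implicit Arguments. Unset Strict Implicit. Unset Printing Implicit Defensive.
Import GRing.Theory.
Local Open Scope ring_scope.

(* Vertex set of P_m is 'I_m; i and ordS i (= i+1 mod m) are adjacent.
   Z_2^2 is 'rV['F_2]_2, Z_2^4 is 'rV['F_2]_4. *)

Definition is_char_Pm (m : nat) (lam : 'I_m -> 'rV['F_2]_2) : Prop :=
  forall i : 'I_m, lam i != 0 /\ lam i != lam (ordS i).

Definition supp (m : nat) (lam : 'I_m -> 'rV['F_2]_2) (p : 'I_m) : {set 'I_m} :=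
  [set x | lam x == lam p].

Definition eset (m : nat) (lam : 'I_m -> 'rV['F_2]_2) (p : 'I_m) (S : {set 'I_m}) : Prop :=
  S \subset supp lam p /\ ~~ odd #|S|.

(** Colouring of the arcs of [m] \ S (|S| even): a vertex v is black iff an odd
    number of points of S precede it in 0..m-1.  Consecutive arcs get opposite
    colours, and the arc wrapping around m-1 -> 0 is consistently coloured
    because |S| is even. *)
Definition black (m : nat) (S : {set 'I_m}) (v : 'I_m) : bool :=
  odd #|[set s in S | (s < v)%N]|.

(** inv_S lam (for the e-set (p,S)): on black vertices exchange the two values
    different from lam p (the value x <> lam p, x <> 0, is exchanged with
    x + lam p). *)
Definition invS (m : nat) (lam : 'I_m -> 'rV['F_2]_2) (p : 'I_m) (S : {set 'I_m})
  (v : 'I_m) : 'rV['F_2]_2 :=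
  if (v \notin S) && black S v && (lam v != lam p) then lam v + lam p else lam v.

(** Omega_r(S) = S together with the black arcs for the colouring in which the
    arc containing r is white. *)
Definition Omega (m : nat) (r : 'I_m) (S : {set 'I_m}) : {set 'I_m} :=
  [set x | (x \in S) || (black S x != black S r)].

Definition Pm_face (m : nat) (N : {set 'I_m}) : bool :=
  (#|N| <= 1)%N || [exists i : 'I_m, N == [set i; ordS i]].

Definition Pm_min_nonface (m : nat) (N : {set 'I_m}) : bool :=
  ~~ Pm_face N && [forall N' : {set 'I_m}, (N' \proper N) ==> Pm_face N'].

(** The wedge wed_{p,q} P_m: vertices are encoded in 'I_m * bool:
    (v,false) is the vertex v (v <> p,q); p_1 = (p,false), p_2 = (p,true),
    q_1 = (q,false), q_2 = (q,true).  Other pairs are not vertices. *)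
Definition wed_vert (m : nat) (p q : 'I_m) : {set 'I_m * bool} :=
  [set x | (x.2 == false) || (x.1 == p) || (x.1 == q)].

Definition wed_repl (m : nat) (p q : 'I_m) (N : {set 'I_m}) : {set 'I_m * bool} :=
  [set x in wed_vert p q | x.1 \in N].

Definition wed_face (m : nat) (p q : 'I_m) (sigma : {set 'I_m * bool}) : bool :=
  (sigma \subset wed_vert p q) &&
  [forall N : {set 'I_m}, Pm_min_nonface N ==> ~~ (wed_repl p q N \subset sigma)].

Definition is_char_wed (m : nat) (p q : 'I_m) (Lam : 'I_m * bool -> 'rV['F_2]_4) : Prop :=
  forall sigma : {set 'I_m * bool}, wed_face p q sigma ->
    row_free (\matrix_(k < #|sigma|) Lam (enum_val k)).

(** Identification of the link of {p_i, q_j} with P_m: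
    p_{3-i} |-> p, q_{3-j} |-> q (here i,j : bool, false = 1, true = 2). *)
Definition link_id (m : nat) (p q : 'I_m) (i j : bool) (v : 'I_m) : 'I_m * bool :=
  if v == p then (p, ~~ i) else if v == q then (q, ~~ j) else (v, false).

(** proj_{p_i,q_j} Lam is D-J equivalent to mu: there is a linear map
    M : Z_2^4 -> Z_2^2 whose kernel is exactly <Lam p_i, Lam q_j> (i.e. M
    induces, up to GL(2,Z_2), the quotient map) with
    mu v = M (Lam (link_id v)) for every vertex v of P_m. *)
Definition proj_equiv (m : nat) (p q : 'I_m) (Lam : 'I_m * bool -> 'rV['F_2]_4)
  (i j : bool) (mu : 'I_m -> 'rV['F_2]_2) : Prop :=
  exists M : 'M['F_2]_(4, 2),
    [/\ Lam (p, i) *m M = 0, Lam (q, j) *m M = 0,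
        (forall x : 'rV['F_2]_4, x *m M = 0 ->
           exists a b : 'F_2, x = a *: Lam (p, i) + b *: Lam (q, j))
      & forall v : 'I_m, mu v = Lam (link_id p q i j v) *m M].

(* The three prescribed projections force a realization [Lam]: in the basis
   [Lam p_1, Lam p_2, Lam q_1, Lam q_2], a vertex [v] other than [p], [q] has
   [p_1]- and [q_1]-coordinates those of [lam v] in the basis [lam p, lam q], and
   [p_2]-, [q_2]-coordinates that also record whether [v] lies in [Omega q S],
   resp. [Omega p T] ([square_map_unique]).  Projecting this forced map onto the
   link of [{p_1, q_1}] gives a fourth map [corner_map] over [P_m], and a map over
   the wedge is characteristic iff its four projections are ([char_Pm_of_proj],
   [char_wed_of_proj]).  Following the colours along the cycle, [corner_map]
   vanishes at a vertex or takes equal values at adjacent vertices exactly when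
   [Omega q S] and [Omega p T] meet ([corner_char_iff]). *)

From HB Require Import structures.
From mathcomp Require Import all_boot all_order all_algebra.
From mathcomp Require Import zify.
Set Implicit Arguments. Unset Strict Implicit. Unset Printing Implicit Defensive.
Import GRing.Theory.
Local Open Scope ring_scope.

(** * Arithmetic over [Z_2] *)

Lemma F2_cases (a : 'F_2) : a = 0 \/ a = 1.
Proof. by case: a => [[|[|k]] Hk]; [left|right|]; try apply: val_inj. Qed.

Lemma addrr_F2 n k (x : 'M['F_2]_(n, k)) : x + x = 0.
Proof. by rewrite -[x]scale1r -scalerDl (addrr_pchar2 (pchar_Fp _)) ?scale0r. Qed.

Lemma oppr_F2 n k (x : 'M['F_2]_(n, k)) : - x = x.
Proof. by rewrite -[- x]add0r -(addrr_F2 x) addrK. Qed.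

Lemma scaler_bool n k (b : bool) (x : 'M['F_2]_(n, k)) : b%:R *: x = if b then x else 0.
Proof. by case: b; rewrite ?scale1r ?scale0r. Qed.

Lemma natr_addb_F2 (x y : bool) : ((x (+) y)%:R : 'F_2) = x%:R + y%:R.
Proof. by case: x; case: y; rewrite ?add0r ?addr0 //= (addrr_pchar2 (pchar_Fp _)). Qed.

Lemma scaler_addb_F2 n k (x y : bool) (v : 'M['F_2]_(n, k)) :
  (x (+) y)%:R *: v = x%:R *: v + y%:R *: v.
Proof. by rewrite natr_addb_F2 scalerDl. Qed.

Lemma scaler_injl (K : fieldType) n (a : 'rV[K]_n) (c d : K) :
  a != 0 -> c *: a = d *: a -> c = d.
Proof.
move=> a0 /eqP; rewrite -subr_eq0 -scalerBl scaler_eq0 (negbTE a0) orbF subr_eq0.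
by move/eqP.
Qed.

Lemma third_color (a b c : 'rV['F_2]_2) : a != 0 -> b != 0 -> c != 0 -> a != b ->
  c != a -> c != b -> c = a + b.
Proof.
move=> a0 b0 c0 ab ca cb; apply/eqP; apply: contraT => cab.
have ab0 : a + b != 0 by apply: contra ab; rewrite addr_eq0 oppr_F2.
have aba : a + b != a by rewrite -subr_eq0 addrAC subrr add0r.
have abb : a + b != b by rewrite -subr_eq0 addrK.
have U : uniq [:: 0; a; b; a + b; c].
  rewrite /= !inE !negb_or !(eq_sym 0) a0 b0 ab0 c0 ab.
  by rewrite !(eq_sym _ c) ca cb cab !(eq_sym _ (a + b)) aba abb.
have := max_card (mem [:: 0; a; b; a + b; c]).
by rewrite (card_uniqP U) card_mx card_Fp.
Qed.

Section Independent.
Variables (n : nat) (r s : 'rV['F_2]_n).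
Hypotheses (r0 : r != 0) (s0 : s != 0) (rs : r != s).

Lemma indep_eq0 (x y : bool) : x%:R *: r + y%:R *: s = 0 -> ~~ x /\ ~~ y.
Proof.
rewrite !scaler_bool; case: x; case: y; rewrite ?addr0 ?add0r => // /eqP.
- by rewrite addr_eq0 oppr_F2 (negbTE rs).
- by rewrite (negbTE r0).
- by rewrite (negbTE s0).
Qed.

Lemma indep_eq (x y x' y' : bool) :
  x%:R *: r + y%:R *: s = x'%:R *: r + y'%:R *: s -> x = x' /\ y = y'.
Proof.
move/(congr1 (+%R^~ (x'%:R *: r + y'%:R *: s))); rewrite addrr_F2.
rewrite addrACA -!scalerDl -!natr_addb_F2 => /indep_eq0 [+ +].
by case: x; case: x'; case: y; case: y'.
Qed.
End Independent.

(** * The cycle [P_m] *)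

Section Cycle.
Variable m : nat.
Implicit Types (S N : {set 'I_m}) (u v : 'I_m).

Lemma val_ordS v : val (ordS v) = if (v.+1 < m)%N then v.+1 else 0%N.
Proof.
rewrite /=; case: ifP => h; first by rewrite modn_small.
have -> : v.+1 = m by have := ltn_ord v; lia.
by rewrite modnn.
Qed.

Lemma ordS_neq v : (1 < m)%N -> ordS v != v.
Proof. by move=> m1; rewrite -val_eqE val_ordS; case: ifP => h /=; have := ltn_ord v; lia. Qed.

Definition adj u v := (ordS u == v) || (ordS v == u).

Lemma adjC u v : adj u v = adj v u.
Proof. by rewrite /adj orbC. Qed.

Lemma adj_ordS u : adj u (ordS u).
Proof. by rewrite /adj eqxx. Qed.

Lemma adj_ord_pred u : adj u (ord_pred u).
Proof. by rewrite /adj ord_predK eqxx orbT. Qed.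

Lemma black_ordS S v : ~~ odd #|S| -> black S (ordS v) = (v \in S) (+) black S v.
Proof.
move=> evS; rewrite /black val_ordS; case: ifP => h.
  rewrite (cardsD1 v) !inE ltnS leqnn andbT.
  have -> : [set s in S | (s < v.+1)%N] :\ v = [set s in S | (s < v)%N].
    apply/setP => s; rewrite !inE ltnS leq_eqVlt -val_eqE /=.
    by case: (s =P v :> nat) => [->|_]; rewrite ?eqxx ?ltnn ?andbF.
  by rewrite oddD oddb.
have -> : [set s in S | (s < 0)%N] = set0 by apply/setP => s; rewrite !inE ltn0 andbF.
have -> : [set s in S | (s < v)%N] = S :\ v.
  apply/setP => s; rewrite !inE andbC; congr andb.
  have := ltn_ord s; have := ltn_ord v; rewrite -val_eqE /=; lia.
rewrite cards0 /=; case vS: (v \in S).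
  by move: evS; rewrite (cardsD1 v S) vS /= negbK => ->.
by move: evS; rewrite (cardsD1 v S) vS add0n => /negbTE ->.
Qed.

Lemma black_adj S u v : ~~ odd #|S| -> adj u v -> u \notin S -> v \notin S ->
  black S u = black S v.
Proof.
move=> evS /orP[]/eqP <- uS vS; rewrite black_ordS //.
  by rewrite (negbTE uS).
by rewrite (negbTE vS).
Qed.

Lemma mem_Omega r S v : v \notin S -> (v \in Omega r S) = (black S v != black S r).
Proof. by rewrite inE => /negbTE ->. Qed.

Lemma Omega_self r S : r \notin S -> r \notin Omega r S.
Proof. by move=> rS; rewrite mem_Omega // eqxx. Qed.

Lemma Omega_adj r S u v : ~~ odd #|S| -> adj u v -> u \notin S -> v \notin S ->
  (u \in Omega r S) = (v \in Omega r S).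
Proof. by move=> evS uv uS vS; rewrite !mem_Omega // (black_adj evS uv uS vS). Qed.

(* Of the two arcs bounded by a point of [S], one is black. *)
Lemma Omega_nbr r S x : ~~ odd #|S| -> x \in Omega r S ->
  ord_pred x \notin S -> ordS x \notin S ->
  exists2 u, adj x u & (u \notin S) && (u \in Omega r S).
Proof.
move=> evS xO predS succS; case: (boolP (x \in S)) => xS; last first.
  exists (ordS x); first exact: adj_ordS.
  by rewrite succS -(Omega_adj _ evS (adj_ordS x) xS succS).
have e1 : black S (ordS x) = ~~ black S x by rewrite black_ordS // xS.
have e2 : black S (ord_pred x) = black S x.
  by rewrite -[in RHS](ord_predK x) black_ordS // (negbTE predS).
case: (boolP (black S (ordS x) == black S r)) => h.
  exists (ord_pred x); first exact: adj_ord_pred.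
  by rewrite predS mem_Omega // e2 -(eqP h) e1; case: (black S x).
by exists (ordS x); [exact: adj_ordS | rewrite succS mem_Omega].
Qed.

Lemma Pm_face_sub N N' : N \subset N' -> Pm_face N' -> Pm_face N.
Proof.
move=> sub /orP[c|/existsP[i /eqP E]]; apply/orP.
  by left; apply: leq_trans (subset_leq_card sub) c.
have : (#|N| <= 2)%N.
  by apply: leq_trans (subset_leq_card sub) _; rewrite E cards2; case: (_ != _).
rewrite leq_eqVlt ltnS => /orP[/eqP c2|]; last by left.
right; apply/existsP; exists i; rewrite -E eqEcard sub /=.
by rewrite c2 E cards2; case: (_ != _).
Qed.

Lemma Pm_face_adj u v : adj u v -> Pm_face [set u; v].
Proof.
case/orP=> /eqP <-; apply/orP; right; apply/existsP; first by exists u.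
by exists v; rewrite setUC.
Qed.

Lemma Pm_face_edge (x0 : 'I_m) N : Pm_face N -> exists i, N \subset [set i; ordS i].
Proof.
case/orP=> [c|/existsP[i /eqP ->]]; last by exists i.
case: (set_0Vmem N) => [->|[x xN]]; first by exists x0; apply: sub0set.
exists x; apply/subsetP => y yN; rewrite !inE.
by rewrite (card_le1_eqP c y x yN xN) eqxx.
Qed.

Lemma Pm_nonface_min N :
  ~~ Pm_face N -> exists2 N' : {set 'I_m}, N' \subset N & Pm_min_nonface N'.
Proof.
move: {2}#|N| (leqnn #|N|) => n; elim: n N => [|n IH] N.
  by rewrite leqn0 => /eqP c; rewrite /Pm_face c.
move=> c nf; case: (boolP [forall N' : {set 'I_m}, (N' \proper N) ==> Pm_face N']) => H.
  by exists N => //; rewrite /Pm_min_nonface nf H.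
move/forallPn: H => [N']; rewrite negb_imply => /andP[pr nf'].
have [N'' s mn] := IH N' (leq_trans (proper_card pr) c) nf'.
by exists N'' => //; apply: subset_trans s (proper_sub pr).
Qed.

Lemma char_Pm_adj (mu : 'I_m -> 'rV['F_2]_2) u v :
  is_char_Pm mu -> adj u v -> mu u != mu v.
Proof.
move=> mu_char /orP[]/eqP <-; first by case: (mu_char u).
by rewrite eq_sym; case: (mu_char v).
Qed.

Lemma char_Pm_face_sum (mu : 'I_m -> 'rV['F_2]_2) N :
  is_char_Pm mu -> Pm_face N -> \sum_(v in N) mu v = 0 -> N = set0.
Proof.
move=> mu_char FN; case: (set_0Vmem N) => [//|[x xN]].
have [i sub] := Pm_face_edge x FN.
have [mu_nz mu_ne] := mu_char i.
have ij : i != ordS i by apply: contraNneq mu_ne => <-.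
have [iN|iN] := boolP (i \in N); have [jN|jN] := boolP (ordS i \in N).
- have -> : N = [set i; ordS i] by apply/eqP; rewrite eqEsubset sub subUset !sub1set iN jN.
  rewrite big_setU1 ?inE // big_set1 => /eqP; rewrite addr_eq0 oppr_F2.
  by rewrite (negbTE (mu_char i).2).
- have -> : N = [set i].
    apply/setP => y; rewrite inE; apply/idP/eqP => [yN|->//].
    by move: (subsetP sub y yN); rewrite !inE => /orP[/eqP //|/eqP yj]; rewrite -yj yN in jN.
  by rewrite big_set1 => /eqP; rewrite (negbTE mu_nz).
- have -> : N = [set ordS i].
    apply/setP => y; rewrite inE; apply/idP/eqP => [yN|->//].
    by move: (subsetP sub y yN); rewrite !inE => /orP[/eqP yi|/eqP //]; rewrite -yi yN in iN.
  by rewrite big_set1 => /eqP; rewrite (negbTE (mu_char (ordS i)).1).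
- by move: (subsetP sub x xN); rewrite !inE => /orP[]/eqP xE; rewrite -xE xN in iN jN.
Qed.

End Cycle.

Section FreeFamilies.
Variables (T : finType) (n : nat).

Lemma free_coef_eq0 (K : fieldType) (F : T -> 'rV[K]_n) (X : {set T}) (c : T -> K) :
  row_free (\matrix_(k < #|X|) F (enum_val k)) ->
  \sum_(x in X) c x *: F x = 0 -> {in X, forall x, c x = 0}.
Proof.
move=> freeX sum0 x xX.
have : \row_k c (enum_val k) *m \matrix_(k < #|X|) F (enum_val k) = 0.
  rewrite mulmx_sum_row -[RHS]sum0 (big_enum_val (A := mem X)) /=.
  by apply: eq_bigr => k _; rewrite rowK mxE.
move/eqP; rewrite (mulmx_free_eq0 _ freeX) => /eqP/rowP/(_ (enum_rank_in xX x)).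
by rewrite !mxE enum_rankK_in.
Qed.

Lemma row_free_of_sums (F : T -> 'rV['F_2]_n) (X : {set T}) :
  (forall Y : {set T}, Y \subset X -> \sum_(x in Y) F x = 0 -> Y = set0) ->
  row_free (\matrix_(k < #|X|) F (enum_val k)).
Proof.
move=> sums_nz; apply: inj_row_free => y yA0; apply/rowP => k; rewrite mxE.
pose Y := [set enum_val k | k in [set k | y 0 k == 1]].
have Y0 : Y = set0.
  apply: sums_nz; first by apply/subsetP => _ /imsetP[l _ ->]; exact: enum_valP.
  rewrite big_imset /=; last by move=> i j _ _; apply: enum_val_inj.
  rewrite -[RHS]yA0 mulmx_sum_row big_mkcond /=; apply: eq_bigr => l _; rewrite rowK inE.
  by case: (F2_cases (y 0 l)) => ->; rewrite ?scale1r ?scale0r.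
case: (F2_cases (y 0 k)) => // yk.
have : enum_val k \in Y by apply: imset_f; rewrite inE yk.
by rewrite Y0 inE.
Qed.

End FreeFamilies.

(** * The wedge [wed_(p,q) P_m] and its projections *)

Section Wedge.
Variables (m : nat) (p q : 'I_m).
Implicit Types (X Y : {set 'I_m * bool}) (N : {set 'I_m}).

(* The face of [P_m] that a set of vertices of the wedge lies over. *)
Definition wed_base X : {set 'I_m} :=
  [set v | ((v, false) \in X) && (((v != p) && (v != q)) || ((v, true) \in X))].

Lemma wed_faceP X : wed_face p q X = (X \subset wed_vert p q) && Pm_face (wed_base X).
Proof.
rewrite /wed_face; case: (boolP (X \subset wed_vert p q)) => //= sub.
apply/idP/idP.
  move=> H; apply: contraT => nf.
  have [N sN mn] := Pm_nonface_min nf.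
  have := (forallP H) N; rewrite mn /= => /negP H2; exfalso; apply: H2.
  apply/subsetP => -[v b]; rewrite /wed_repl !inE /= => /andP[vw vN].
  have := subsetP sN v vN; rewrite !inE => /andP[h1 h2].
  case: b vw => //= vw.
  by case/orP: h2 => // /andP[/negbTE vp /negbTE vq]; move: vw; rewrite vp vq.
move=> F; apply/forallP => N; apply/implyP => /andP[nf _]; apply: contra nf => sN.
apply: Pm_face_sub F; apply/subsetP => v vN.
have v1 : (v, false) \in X by apply: (subsetP sN); rewrite !inE /= vN.
rewrite !inE v1 /=; case: (boolP ((v != p) && (v != q))) => //= h.
apply: (subsetP sN); rewrite !inE /= vN andbT.
by move: h; rewrite negb_and !negbK => /orP[]->; rewrite ?orbT.
Qed.

Lemma wed_face_sub X Y : Y \subset X -> wed_face p q X -> wed_face p q Y.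
Proof.
move=> s /andP[s1 /forallP F]; apply/andP; split; first exact: subset_trans s s1.
apply/forallP => N; apply/implyP => mn; have := F N; rewrite mn /=.
by apply: contra => h; apply: subset_trans h s.
Qed.

Lemma char_wed_of_mulmx (Lam Lam' : 'I_m * bool -> 'rV['F_2]_4) (B : 'M_4) :
  {in wed_vert p q, forall x, Lam x = Lam' x *m B} ->
  is_char_wed p q Lam -> is_char_wed p q Lam'.
Proof.
move=> LamE Lam_char X FX; have := Lam_char X FX.
have -> : \matrix_(k < #|X|) Lam (enum_val k) = (\matrix_(k < #|X|) Lam' (enum_val k)) *m B.
  apply/row_matrixP => k; rewrite row_mul !rowK LamE //.
  by move: FX => /andP[/subsetP sub _]; apply/sub/enum_valP.
rewrite /row_free => /eqP rkAB; rewrite eqn_leq rank_leq_row -[X in (X <= _)%N]rkAB.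
exact: mxrankM_maxl.
Qed.

Hypothesis pq : p != q.
Local Notation link := (link_id p q).

Lemma link_p i j : link i j p = (p, ~~ i).
Proof. by rewrite /link_id eqxx. Qed.

Lemma link_q i j : link i j q = (q, ~~ j).
Proof. by rewrite /link_id eqxx eq_sym (negbTE pq). Qed.

Lemma link_other i j v : v != p -> v != q -> link i j v = (v, false).
Proof. by rewrite /link_id => /negbTE -> /negbTE ->. Qed.

Lemma link_fst i j v : (link i j v).1 = v.
Proof. by rewrite /link_id; case: (eqVneq v p) => [->|_] //; case: (eqVneq v q) => [->|_]. Qed.

Lemma link_inj i j : injective (link i j).
Proof. exact: can_inj (link_fst i j). Qed.

Lemma link_wed_vert i j v : link i j v \in wed_vert p q.
Proof.
rewrite /link_id inE; case: (eqVneq v p) => [_|_]; first by rewrite eqxx orbT.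
by case: (eqVneq v q) => _ /=; rewrite ?eqxx ?orbT.
Qed.

Lemma link_neq_p i j v : link i j v != (p, i).
Proof.
rewrite /link_id; case: (eqVneq v p) => [_|vp]; first by rewrite xpair_eqE eqxx /=; case: i.
by case: (eqVneq v q) => _; rewrite xpair_eqE ?(eq_sym q) ?(negbTE pq) ?(negbTE vp).
Qed.

Lemma link_neq_q i j v : link i j v != (q, j).
Proof.
rewrite /link_id; case: (eqVneq v p) => [_|vp].
  by rewrite xpair_eqE (negbTE pq).
case: (eqVneq v q) => [_|vq]; first by rewrite xpair_eqE eqxx /=; case: j.
by rewrite xpair_eqE (negbTE vq).
Qed.

Lemma wed_vert_link i j y : y \in wed_vert p q -> y != (p, i) -> y != (q, j) ->
  link i j y.1 = y.
Proof.
case: y => v b; rewrite inE /= /link_id => vert.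
case: (eqVneq v p) => [->|vp]; first by case: b {vert}; case: i; rewrite ?eqxx.
case: (eqVneq v q) => [->|vq]; first by case: b {vert}; case: j; rewrite ?eqxx.
by case: b vert; rewrite (negbTE vp) (negbTE vq).
Qed.

Lemma wed_face_link i j N : Pm_face N ->
  wed_face p q (link i j @: N :|: [set (p, i); (q, j)]).
Proof.
move=> FN; rewrite wed_faceP; apply/andP; split.
  apply/subsetP => y; rewrite !inE => /orP[/imsetP[v _ ->]|/orP[]/eqP->].
  - by have := link_wed_vert i j v; rewrite inE.
  - by rewrite eqxx orbT.
  - by rewrite eqxx !orbT.
apply: Pm_face_sub FN; apply/subsetP => w.
have inN b : (w, b) \in link i j @: N :|: [set (p, i); (q, j)] ->
    (w, b) != (p, i) -> (w, b) != (q, j) -> w \in N.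
  rewrite !inE => /orP[/imsetP[v vN e] _ _|/orP[]/eqP->]; rewrite ?eqxx //.
  by rewrite (_ : w = v) // -(link_fst i j v) -e.
rewrite inE => /andP[w1 /orP[/andP[wp wq]|w2]].
  by apply: (inN false w1); rewrite xpair_eqE ?(negbTE wp) ?(negbTE wq).
case: (eqVneq (w, false) (p, i)) => [[wp iF]|ne1].
  by apply: (inN true w2); rewrite wp -?iF xpair_eqE ?(negbTE pq) ?andbF.
case: (eqVneq (w, false) (q, j)) => [[wq jF]|ne2]; last exact: inN false w1 ne1 ne2.
by apply: (inN true w2); rewrite wq -?jF xpair_eqE ?(eq_sym q) ?(negbTE pq) ?andbF.
Qed.

Lemma link_preim_sub_base Y :
  [set v | link ((p, true) \in Y) ((q, true) \in Y) v \in Y] \subset wed_base Y.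
Proof.
apply/subsetP => v; rewrite !inE /link_id.
case: (eqVneq v p) => [->|vp].
  by case pY: ((p, true) \in Y) => h; rewrite /= ?orbT ?andbT ?andbF; [exact: h|rewrite -pY].
case: (eqVneq v q) => [->|vq]; last by move=> ->.
by case qY: ((q, true) \in Y) => h; rewrite /= ?orbT ?andbT ?andbF; [exact: h|rewrite -qY].
Qed.

Section Projection.
Variables (Lam : 'I_m * bool -> 'rV['F_2]_4) (i j : bool).
Variables (mu : 'I_m -> 'rV['F_2]_2) (M : 'M['F_2]_(4, 2)).
Hypotheses (Mp : Lam (p, i) *m M = 0) (Mq : Lam (q, j) *m M = 0).
Hypothesis Mmu : forall v, mu v = Lam (link i j v) *m M.

Lemma proj_sum Y : Y \subset wed_vert p q ->
  (\sum_(y in Y) Lam y) *m M = \sum_(v in [set v | link i j v \in Y]) mu v.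
Proof.
move=> sub; rewrite mulmx_suml (big_setID [set (p, i); (q, j)]) /=.
rewrite big1 ?add0r => [|y]; last by rewrite !inE => /andP[_ /orP[]/eqP->].
have -> : Y :\: [set (p, i); (q, j)] = link i j @: [set v | link i j v \in Y].
  apply/setP => y; rewrite !inE; apply/idP/imsetP => [/andP[/norP[ne1 ne2] yY]|[v]].
    by exists y.1; rewrite ?inE wed_vert_link ?(subsetP sub).
  by rewrite inE => vY ->; rewrite (negbTE (link_neq_p i j v)) (negbTE (link_neq_q i j v)) vY.
rewrite (big_imset (fun y => Lam y *m M)) => [|u v _ _]; last exact: link_inj.
by apply: eq_bigr => v _; rewrite Mmu.
Qed.

Lemma proj_preim_eq0 Y : is_char_Pm mu -> Y \subset wed_vert p q ->
  \sum_(y in Y) Lam y = 0 -> Pm_face [set v | link i j v \in Y] ->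
  [set v | link i j v \in Y] = set0.
Proof.
move=> mu_char sub sum0 F; apply: char_Pm_face_sum mu_char F _.
by rewrite -proj_sum // sum0 mul0mx.
Qed.

Hypothesis Mker : forall x, x *m M = 0 -> exists a b, x = a *: Lam (p, i) + b *: Lam (q, j).

Lemma proj_face_sum_eq0 N : is_char_wed p q Lam -> Pm_face N ->
  \sum_(v in N) mu v = 0 -> N = set0.
Proof.
move=> Lam_char FN sum0; set Z := link i j @: N.
have [a [b Zab]] : exists a b, \sum_(y in Z) Lam y = a *: Lam (p, i) + b *: Lam (q, j).
  apply: Mker; rewrite -sum0 big_imset => [|u v _ _]; last exact: link_inj.
  by rewrite mulmx_suml; apply: eq_bigr => v _; rewrite Mmu.
pose c y := if y == (p, i) then a else if y == (q, j) then b else 1.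
have qp : (q, j) != (p, i) by rewrite xpair_eqE (eq_sym q) (negbTE pq).
have c_Z y : y \in Z -> c y = 1.
  by case/imsetP=> v _ ->; rewrite /c (negbTE (link_neq_p _ _ _)) (negbTE (link_neq_q _ _ _)).
have : \sum_(y in Z :|: [set (p, i); (q, j)]) c y *: Lam y = 0.
  rewrite (bigD1 (p, i)) ?inE ?eqxx ?orbT //= (bigD1 (q, j)) /=; last first.
    by rewrite !inE eqxx qp !orbT.
  rewrite (eq_bigl [in Z]) => [|y]; last first.
    rewrite !inE; case yZ: (y \in Z) => /=.
      by case/imsetP: yZ => v _ ->; rewrite link_neq_p link_neq_q.
    by case: (y == (p, i)); case: (y == (q, j)).
  under eq_bigr => y yZ do rewrite c_Z // scale1r.
  rewrite Zab /c eqxx (negbTE qp) eqxx.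
  by rewrite addrA addrr_F2.
move/(free_coef_eq0 (Lam_char _ (wed_face_link i j FN))) => c0.
apply/setP => v; rewrite in_set0; apply/negbTE/negP => vN.
have vZ : link i j v \in Z by apply: imset_f.
have vX : link i j v \in Z :|: [set (p, i); (q, j)] by rewrite inE vZ.
by move: (c0 _ vX) => /eqP; rewrite c_Z // oner_eq0.
Qed.

Lemma char_Pm_of_proj : (1 < m)%N -> is_char_wed p q Lam -> is_char_Pm mu.
Proof.
move=> m1 Lam_char v; split; apply/negP.
  move/eqP=> mu0; have := @proj_face_sum_eq0 [set v] Lam_char.
  by rewrite big_set1 /Pm_face cards1 => /(_ isT mu0)/setP/(_ v); rewrite !inE eqxx.
move/eqP=> mu_eq; have := @proj_face_sum_eq0 [set v; ordS v] Lam_char.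
rewrite big_setU1 /=; last by rewrite inE eq_sym ordS_neq.
rewrite big_set1 mu_eq addrr_F2.
by move=> /(_ (Pm_face_adj (adj_ordS v)) erefl)/setP/(_ v); rewrite !inE eqxx.
Qed.

End Projection.

(* Given a dependent subset [Y] of a face, choose [i], [j] so that the preimage of
   [Y] under the link map lies over a face of [P_m]; projecting then shows that [Y]
   consists of [p_i], [q_j] only, and the two other projections rule these out. *)
Lemma char_wed_of_proj (Lam : 'I_m * bool -> 'rV['F_2]_4) :
  (forall i j, exists2 mu, proj_equiv p q Lam i j mu & is_char_Pm mu) ->
  is_char_wed p q Lam.
Proof.
move=> proj X FX; apply: row_free_of_sums => Y YX sum0.
have /andP[sub FbY] : (Y \subset wed_vert p q) && Pm_face (wed_base Y).
  by rewrite -wed_faceP; exact: wed_face_sub YX FX.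
have preim0 i j : Pm_face [set v | link i j v \in Y] -> [set v | link i j v \in Y] = set0.
  have [mu [M [Mp Mq _ Mmu]] mu_char] := proj i j.
  by apply: (proj_preim_eq0 Mp Mq Mmu mu_char sub); exact sum0.
set i := (p, true) \in Y; set j := (q, true) \in Y.
have YK : Y \subset [set (p, i); (q, j)].
  apply/subsetP => y yY; rewrite !inE; apply: contraT => /norP[ne1 ne2].
  have := preim0 i j (Pm_face_sub (link_preim_sub_base Y) FbY).
  by move/setP/(_ y.1); rewrite !inE wed_vert_link ?(subsetP sub) ?yY.
have face1 (v : 'I_m) : Pm_face [set v] by rewrite /Pm_face cards1.
have piY : (p, i) \notin Y.
  have sub1 : [set v | link (~~ i) j v \in Y] \subset [set p].
    apply/subsetP => v; rewrite !inE => /(subsetP YK); rewrite !inE => /orP[]/eqP e.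
      by rewrite -(link_fst (~~ i) j v) e.
    by move: (link_neq_q (~~ i) j v); rewrite e eqxx.
  have := preim0 (~~ i) j (Pm_face_sub sub1 (face1 p)).
  by move/setP/(_ p); rewrite !inE link_p negbK => ->.
have qjY : (q, j) \notin Y.
  have sub1 : [set v | link i (~~ j) v \in Y] \subset [set q].
    apply/subsetP => v; rewrite !inE => /(subsetP YK); rewrite !inE => /orP[]/eqP e.
      by move: (link_neq_p i (~~ j) v); rewrite e eqxx.
    by rewrite -(link_fst i (~~ j) v) e.
  have := preim0 i (~~ j) (Pm_face_sub sub1 (face1 q)).
  by move/setP/(_ q); rewrite !inE link_q negbK => ->.
apply/setP => y; rewrite in_set0; apply/negbTE/negP => yY.
by move: (subsetP YK y yY); rewrite !inE => /orP[]/eqP e; rewrite -e yY in piY qjY.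
Qed.

End Wedge.

(** * Characteristic maps over [P_m] in coordinates *)

Section Coordinates.
Variables (m : nat) (lam : 'I_m -> 'rV['F_2]_2) (p q : 'I_m) (S : {set 'I_m}).
Hypotheses (hlam : is_char_Pm lam) (hS : eset lam p S).

Definition off (c v : 'I_m) := lam v != lam c.

Lemma lam_nz v : lam v != 0.
Proof. by case: (hlam v). Qed.

Lemma lam_adj u v : adj u v -> off u v.
Proof. by move=> uv; rewrite /off eq_sym char_Pm_adj. Qed.

Lemma on_adj c u v : ~~ off c u -> adj u v -> off c v.
Proof. by rewrite /off negbK => /eqP <-; apply: lam_adj. Qed.

Lemma notin_eset v : off p v -> v \notin S.
Proof. by case: hS => /subsetP sub _; apply: contra => /sub; rewrite inE. Qed.

Lemma invS_flip v : invS lam p S v = lam v + (off p v && black S v)%:R *: lam p.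
Proof.
rewrite /invS -/(off p v); case: (boolP (off p v)) => [vp|_]; last first.
  by rewrite scale0r addr0 andbF.
by rewrite notin_eset //= andbT; case: (black S v); rewrite ?scale1r ?scale0r ?addr0.
Qed.

Lemma invS_on v : ~~ off p v -> invS lam p S v = lam v.
Proof. by move=> /negbTE vp; rewrite invS_flip vp scale0r addr0. Qed.

Lemma flip_adj u w : adj u w -> lam w = lam u + lam p ->
  off p u && black S u -> off p w && black S w.
Proof.
move=> uw wE /andP[up bu].
have wp : off p w.
  by rewrite /off wE -subr_eq0 addrK lam_nz.
by rewrite wp -(black_adj (proj2 hS) uw) ?notin_eset.
Qed.

Lemma invS_char : is_char_Pm (invS lam p S).
Proof.
move=> v; rewrite !invS_flip; split.
  case: (off p v && black S v) / andP => [[vp _]|_];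
    rewrite ?scale1r ?scale0r ?addr0 ?lam_nz //.
  by apply: contra vp; rewrite addr_eq0 oppr_F2.
have vw : adj v (ordS v) := adj_ordS v.
apply/eqP; case fv: (off p v && black S v); case fw: (off p (ordS v) && black S (ordS v));
  rewrite ?scale1r ?scale0r ?addr0.
- by move/addIr/eqP; rewrite (negbTE (hlam v).2).
- by move=> wE; have := flip_adj vw (esym wE) fv; rewrite fw.
- by move=> vE; have := flip_adj (etrans (adjC _ _) vw) vE fw; rewrite fv.
- by move/eqP; rewrite (negbTE (hlam v).2).
Qed.

Hypothesis hpq : lam p != lam q.

Lemma lam_coord v : lam v = (off q v)%:R *: lam p + (off p v)%:R *: lam q.
Proof.
rewrite /off; case: (eqVneq (lam v) (lam p)) => [->|vp].
  by rewrite hpq scale1r scale0r addr0.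
case: (eqVneq (lam v) (lam q)) => [->|vq]; first by rewrite scale0r scale1r add0r.
by rewrite !scale1r; apply: third_color; rewrite ?lam_nz.
Qed.

Lemma invS_q_neq : invS lam p S q != lam p.
Proof.
have qp : off p q by rewrite /off eq_sym.
rewrite invS_flip qp; case: (black S q); rewrite ?scale1r ?scale0r ?addr0 //.
by rewrite -subr_eq0 addrK lam_nz.
Qed.

Definition corner_p v := off q v (+) off p v && (v \in Omega q S).

Lemma invS_coord v :
  invS lam p S v = (corner_p v)%:R *: lam p + (off p v)%:R *: invS lam p S q.
Proof.
rewrite /corner_p; case: (boolP (off p v)) => [vp|/negbTE vp]; last first.
  rewrite invS_on ?vp // scale0r addr0 /= addbF.
  by rewrite {1}lam_coord vp scale0r addr0.
have qp : off p q by rewrite /off eq_sym.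
rewrite !invS_flip {1}lam_coord vp qp mem_Omega ?notin_eset //= !scale1r.
case: (black S v); case: (black S q); rewrite /= scaler_addb_F2 ?scale1r ?scale0r ?addr0 //.
- by rewrite addrA.
- by rewrite addrAC.
- by rewrite addrACA addrr_F2 addr0.
Qed.
End Coordinates.

(* The map on the link of [{p_1, q_1}]: the fourth corner of the square. *)
Definition corner_map m (lam : 'I_m -> 'rV['F_2]_2) (p q : 'I_m) (S T : {set 'I_m}) v :=
  (corner_p lam p q S v)%:R *: lam p + (corner_p lam q p T v)%:R *: lam q.

Lemma corner_sym m (lam : 'I_m -> 'rV['F_2]_2) p q S T v :
  corner_map lam q p T S v = corner_map lam p q S T v.
Proof. exact: addrC. Qed.

Lemma corner_map_p m (lam : 'I_m -> 'rV['F_2]_2) p q S T :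
  eset lam q T -> lam p != lam q -> corner_map lam p q S T p = lam p.
Proof.
move=> hT hpq; have qp : off lam q p by [].
rewrite /corner_map /corner_p /off !eqxx -/(off lam q p) qp /=.
by rewrite (negbTE (Omega_self (notin_eset hT qp))) scale1r scale0r addr0.
Qed.

Section Corner.
Variables (m : nat) (lam : 'I_m -> 'rV['F_2]_2) (p q : 'I_m) (S T : {set 'I_m}).
Hypotheses (hlam : is_char_Pm lam) (hS : eset lam p S) (hT : eset lam q T).
Hypothesis hpq : lam p != lam q.
Local Notation corner := (corner_map lam p q S T).
Local Notation off := (off lam).
Local Notation meet := (Omega q S :&: Omega p T).

Lemma on_p_off_q v : ~~ off p v -> off q v.
Proof. by rewrite /off negbK => /eqP ->. Qed.

Lemma corner_eq0 v : (corner v == 0) = ~~ corner_p lam p q S v && ~~ corner_p lam q p T v.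
Proof.
rewrite /corner_map; apply/idP/idP.
  by move/eqP/(indep_eq0 (lam_nz hlam p) (lam_nz hlam q) hpq) => [-> ->].
by case/andP=> /negbTE -> /negbTE ->; rewrite !scale0r addr0.
Qed.

Lemma corner_nz v : v \notin meet -> corner v != 0.
Proof.
rewrite corner_eq0 /corner_p in_setI.
case: (boolP (off p v)) => [vp|/on_p_off_q vq]; last by rewrite vq.
by case: (off q v); case: (v \in Omega q S); case: (v \in Omega p T).
Qed.

Lemma corner_adj_meet u v : ~~ off p u -> adj u v -> corner u = corner v ->
  exists w, w \in meet.
Proof.
move=> up uv /(indep_eq (lam_nz hlam p) (lam_nz hlam q) hpq) [].
have uq := on_p_off_q up.
have vp : off p v := on_adj hlam up uv.
have uT : u \notin T := notin_eset hT uq.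
rewrite /corner_p (negbTE up) uq vp /=.
case: (boolP (off q v)) => vq /= sv tu.
  by move: tu; rewrite (Omega_adj _ (proj2 hT) uv uT (notin_eset hT vq)); case: (_ \in _).
exists v; rewrite inE -sv /=.
case: (boolP (v \in T)) => vT; first by rewrite inE vT.
by rewrite -(Omega_adj _ (proj2 hT) uv uT vT).
Qed.

Lemma corner_meet_nbr x : ~~ off p x -> x \in meet ->
  exists u, corner u = 0 \/ (adj x u /\ corner x = corner u).
Proof.
rewrite inE => xp /andP[xS xT].
have xq := on_p_off_q xp.
have nbr_p u : adj x u -> off p u := on_adj hlam xp.
have [u xu /andP[uS uO]] : exists2 u, adj x u & (u \notin S) && (u \in Omega q S).
  by apply: (Omega_nbr (proj2 hS) xS); apply: (notin_eset hS); apply: nbr_p;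
    [exact: adj_ord_pred | exact: adj_ordS].
have up := nbr_p u xu; exists u.
have xT' : x \notin T := notin_eset hT xq.
case: (boolP (off q u)) => uq.
  left; apply/eqP; rewrite corner_eq0 /corner_p up uq uO.
  by rewrite -(Omega_adj _ (proj2 hT) xu xT' (notin_eset hT uq)) xT.
by right; split=> //; rewrite /corner_map /corner_p (negbTE xp) xq xT up (negbTE uq) uO.
Qed.

End Corner.

Section CornerChar.
Variables (m : nat) (lam : 'I_m -> 'rV['F_2]_2) (p q : 'I_m) (S T : {set 'I_m}).
Hypotheses (hlam : is_char_Pm lam) (hS : eset lam p S) (hT : eset lam q T).
Hypothesis hpq : lam p != lam q.
Let hqp : lam q != lam p. Proof. by rewrite eq_sym. Qed.
Local Notation corner := (corner_map lam p q S T).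
Local Notation meet := (Omega q S :&: Omega p T).
Let meetC : Omega p T :&: Omega q S = meet := setIC _ _.

Lemma corner_meet_witness x : x \in meet ->
  exists u, corner u = 0 \/ (adj x u /\ corner x = corner u).
Proof.
move=> xO; case: (boolP (off lam p x)) => xp; last exact: corner_meet_nbr.
case: (boolP (off lam q x)) => xq; last first.
  have xO' : x \in Omega p T :&: Omega q S by rewrite meetC.
  have [u] := corner_meet_nbr hlam hT hS hqp xq xO'.
  by rewrite !(corner_sym lam p q S T); exists u.
exists x; left; apply/eqP; move: xO; rewrite in_setI corner_eq0 // /corner_p xp xq /=.
by case/andP=> -> ->.
Qed.

Lemma corner_adj_eq_meet u w : adj u w -> corner u = corner w ->
  exists x, x \in meet.
Proof.
move=> uw uwE.
have adj_meet u' w' : adj u' w' -> corner u' = corner w' ->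
    ~~ off lam p u' || ~~ off lam q u' -> exists x, x \in meet.
  move=> uw' uwE' /orP[up|uq]; first exact: corner_adj_meet uw' uwE'.
  have uwE'' : corner_map lam q p T S u' = corner_map lam q p T S w'.
    by rewrite !(corner_sym lam p q S T).
  have [x xO] := corner_adj_meet hlam hS hqp uq uw' uwE''.
  by exists x; rewrite -meetC.
case: (boolP (~~ off lam p u || ~~ off lam q u)) => [|/norP[/negPn up /negPn uq]].
  exact: adj_meet uw uwE.
apply: (adj_meet w u); rewrite 1?adjC // -negb_and.
apply/negP => /andP[wp wq]; have := lam_adj hlam uw.
by rewrite /off [lam w](lam_coord hlam hpq) [lam u](lam_coord hlam hpq) up uq wp wq eqxx.
Qed.

Lemma corner_char_iff : is_char_Pm corner <-> meet = set0.
Proof.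
split=> [corner_char|meet0 v].
  apply/setP => x; rewrite in_set0; apply/negbTE/negP.
  move/corner_meet_witness => [u [u0|[xu xuE]]].
    by move: (corner_char u).1; rewrite u0 eqxx.
  by move: (char_Pm_adj corner_char xu); rewrite xuE eqxx.
split; first by apply: corner_nz; rewrite // meet0 in_set0.
apply/negP => /eqP/(corner_adj_eq_meet (adj_ordS v))[w].
by rewrite meet0 in_set0.
Qed.

End CornerChar.

(** * The square *)

Definition vec4 (b1 b2 b3 b4 : bool) : 'rV['F_2]_4 :=
  \row_(k < 4) (nth false [:: b1; b2; b3; b4] k)%:R.

Definition mx4 n (r1 r2 r3 r4 : 'rV['F_2]_n) : 'M['F_2]_(4, n) :=
  \matrix_(k < 4) nth 0 [:: r1; r2; r3; r4] k.

Lemma vec4_mulmx n b1 b2 b3 b4 (r1 r2 r3 r4 : 'rV['F_2]_n) :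
  vec4 b1 b2 b3 b4 *m mx4 r1 r2 r3 r4 = b1%:R *: r1 + b2%:R *: r2 + b3%:R *: r3 + b4%:R *: r4.
Proof. by rewrite mulmx_sum_row !big_ord_recl big_ord0 addr0 !rowK !mxE !addrA. Qed.

Lemma vec4_bits (x : 'rV['F_2]_4) : exists b1 b2 b3 b4, x = vec4 b1 b2 b3 b4.
Proof.
exists (x 0 0 == 1), (x 0 1 == 1), (x 0 2 == 1), (x 0 3 == 1).
apply/rowP => k; rewrite mxE.
have -> : x 0 k = (x 0 k == 1)%:R by case: (F2_cases (x 0 k)) => ->.
by case: k => [[|[|[|[|//]]]] lt_k4]; congr ((x 0 _ == 1)%:R); apply: val_inj.
Qed.

Section Square.
Variables (m : nat) (lam : 'I_m -> 'rV['F_2]_2) (p q : 'I_m) (S T : {set 'I_m}).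
Hypotheses (hlam : is_char_Pm lam) (hS : eset lam p S) (hT : eset lam q T).
Hypothesis hpq : lam p != lam q.
Local Notation off := (off lam).

Lemma pq_neq : p != q.
Proof. by apply: contraNneq hpq => ->. Qed.

(* Coordinates with respect to the basis [p_1, p_2, q_1, q_2] of [Z_2^4]; the
   value at [(v, true)] for [v] other than [p], [q] (not a vertex) is irrelevant. *)
Definition square_map (x : 'I_m * bool) : 'rV['F_2]_4 :=
  if x.1 == p then vec4 (~~ x.2) x.2 false false
  else if x.1 == q then vec4 false false (~~ x.2) x.2
  else vec4 (off q x.1) (corner_p lam p q S x.1) (off p x.1) (corner_p lam q p T x.1).

Lemma square_map_p b : square_map (p, b) = vec4 (~~ b) b false false.
Proof. by rewrite /square_map eqxx. Qed.

Lemma square_map_q b : square_map (q, b) = vec4 false false (~~ b) b.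
Proof. by rewrite /square_map /= eq_sym (negbTE pq_neq) eqxx. Qed.

Lemma square_map_other v b : v != p -> v != q ->
  square_map (v, b) = vec4 (off q v) (corner_p lam p q S v) (off p v) (corner_p lam q p T v).
Proof. by rewrite /square_map /= => /negbTE -> /negbTE ->. Qed.

(* Kills [p_i] and [q_j] and sends [p_(~~ i)] to [r] and [q_(~~ j)] to [s]. *)
Definition proj_mx i j (r s : 'rV['F_2]_2) : 'M['F_2]_(4, 2) :=
  mx4 (if i then r else 0) (if i then 0 else r) (if j then s else 0) (if j then 0 else s).

Lemma vec4_proj_mx i j r s b1 b2 b3 b4 :
  vec4 b1 b2 b3 b4 *m proj_mx i j r s =
  (if i then b1 else b2)%:R *: r + (if j then b3 else b4)%:R *: s.
Proof. by rewrite vec4_mulmx; case: i; case: j; rewrite !scaler0 ?addr0 ?add0r. Qed.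

Lemma square_map_proj i j (r s : 'rV['F_2]_2) (mu : 'I_m -> 'rV['F_2]_2) :
  r != 0 -> s != 0 -> r != s -> mu p = r -> mu q = s ->
  (forall v, v != p -> v != q ->
     mu v = (if i then off q v else corner_p lam p q S v)%:R *: r
          + (if j then off p v else corner_p lam q p T v)%:R *: s) ->
  proj_equiv p q square_map i j mu.
Proof.
move=> r0 s0 rs mup muq muv; exists (proj_mx i j r s); split.
- by rewrite square_map_p vec4_proj_mx; clear muv; case: i; case: j; rewrite !scale0r addr0.
- by rewrite square_map_q vec4_proj_mx; clear muv; case: i; case: j; rewrite !scale0r addr0.
- move=> x; have [b1 [b2 [b3 [b4 ->]]]] := vec4_bits x.
  rewrite vec4_proj_mx => /(indep_eq0 r0 s0 rs) [bi bj].
  exists (if i then b2 else b1)%:R, (if j then b4 else b3)%:R.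
  rewrite square_map_p square_map_q; apply/rowP => k; rewrite !mxE; clear muv.
  move: bi bj; case: i; case: j => /negbTE bi /negbTE bj; case: k => [[|[|[|[|//]]]] _] /=;
    by rewrite ?bi ?bj /= ?mulr1 ?mulr0 ?addr0 ?add0r.
- move=> v; rewrite /link_id; case: (eqVneq v p) => [->|vp].
    by rewrite square_map_p vec4_proj_mx negbK mup; clear muv; case: i; case: j;
      rewrite scale1r scale0r addr0.
  case: (eqVneq v q) => [->|vq].
    by rewrite square_map_q vec4_proj_mx negbK muq; clear muv; case: i; case: j;
      rewrite scale1r scale0r add0r.
  by rewrite square_map_other // vec4_proj_mx muv.
Qed.

Lemma square_map_projTT : proj_equiv p q square_map true true lam.
Proof.
apply: (square_map_proj (r := lam p) (s := lam q)); rewrite ?lam_nz //.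
by move=> v _ _; rewrite (lam_coord hlam hpq).
Qed.

Lemma square_map_projFT : proj_equiv p q square_map false true (invS lam p S).
Proof.
apply: (square_map_proj (r := lam p) (s := invS lam p S q)) => //.
- exact: lam_nz.
- exact: (invS_char hlam hS q).1.
- by rewrite eq_sym invS_q_neq.
- by rewrite invS_on // /off eqxx.
- by move=> v _ _; rewrite (invS_coord hlam hS hpq).
Qed.

Lemma square_map_projTF : proj_equiv p q square_map true false (invS lam q T).
Proof.
have hqp : lam q != lam p by rewrite eq_sym.
apply: (square_map_proj (r := invS lam q T p) (s := lam q)) => //.
- exact: (invS_char hlam hT p).1.
- exact: lam_nz.
- exact: invS_q_neq hlam hT hqp.
- by rewrite invS_on // /off eqxx.
- by move=> v _ _; rewrite (invS_coord hlam hT hqp) addrC.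
Qed.

Lemma square_map_projFF : proj_equiv p q square_map false false (corner_map lam p q S T).
Proof.
have hqp : lam q != lam p by rewrite eq_sym.
apply: (square_map_proj (r := lam p) (s := lam q)) => //; rewrite ?lam_nz ?corner_map_p //.
by rewrite -corner_sym corner_map_p.
Qed.

Lemma square_map_unique (Lam : 'I_m * bool -> 'rV['F_2]_4) :
  proj_equiv p q Lam true true lam ->
  proj_equiv p q Lam false true (invS lam p S) ->
  proj_equiv p q Lam true false (invS lam q T) ->
  {in wed_vert p q, forall x, Lam x =
     square_map x *m mx4 (Lam (p, false)) (Lam (p, true)) (Lam (q, false)) (Lam (q, true))}.
Proof.
move=> [M [P2M Q2M kerM muM]] [M' [P1M' Q2M' _ muM']] [M'' [P2M'' Q1M'' _ muM'']].
have pq := pq_neq; have hqp : lam q != lam p by rewrite eq_sym.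
case=> v b; rewrite inE /=.
case: (eqVneq v p) => [-> _|vp].
  by rewrite square_map_p vec4_mulmx; case: b; rewrite !scale1r !scale0r ?addr0 ?add0r.
case: (eqVneq v q) => [-> _|vq].
  by rewrite square_map_q vec4_mulmx; case: b; rewrite !scale1r !scale0r ?addr0 ?add0r.
rewrite !orbF => /eqP ->.
rewrite square_map_other // vec4_mulmx.
set P1 := Lam (p, false); set P2 := Lam (p, true).
set Q1 := Lam (q, false); set Q2 := Lam (q, true).
set X := (off q v)%:R *: P1 + (off p v)%:R *: Q1.
have [c [d Lv]] : exists c d, Lam (v, false) - X = c *: P2 + d *: Q2.
  apply: kerM; rewrite mulmxBl mulmxDl -!scalemxAl.
  have := muM p; have := muM q; have := muM v.
  rewrite link_p // link_q // link_other // /= => <- <- <-.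
  by rewrite -(lam_coord hlam hpq) subrr.
have {}Lv : Lam (v, false) = X + c *: P2 + d *: Q2 by rewrite -addrA -Lv addrC subrK.
have c_E : c = (corner_p lam p q S v)%:R.
  have := muM' v; have := muM' p; have := muM' q.
  rewrite link_p // link_q // link_other // /= (invS_on hS (v := p)) ?/off ?eqxx // => iq ip.
  rewrite (invS_coord hlam hS hpq) Lv !mulmxDl -!scalemxAl P1M' Q2M' -ip -iq !scaler0.
  by rewrite addr0 add0r addrC => /addrI/esym; apply: scaler_injl; exact: lam_nz.
have d_E : d = (corner_p lam q p T v)%:R.
  have := muM'' v; have := muM'' p; have := muM'' q.
  rewrite link_p // link_q // link_other // /= (invS_on hT (v := q)) ?/off ?eqxx // => iq ip.
  rewrite (invS_coord hlam hT hqp) Lv !mulmxDl -!scalemxAl P2M'' Q1M'' -ip -iq !scaler0.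
  by rewrite !addr0 addrC => /addrI/esym; apply: scaler_injl; exact: lam_nz.
by rewrite Lv c_E d_E /X (addrAC ((off q v)%:R *: P1)).
Qed.

End Square.

Unset Implicit Arguments.

Theorem proposition3 (m : nat) (hm : (3 <= m)%N)
  (lam : 'I_m -> 'rV['F_2]_2) (hlam : is_char_Pm lam)
  (p q : 'I_m) (S T : {set 'I_m})
  (hS : eset lam p S) (hT : eset lam q T)
  (hS0 : S != set0) (hT0 : T != set0) (hpq : lam p != lam q) :
  (exists Lam : 'I_m * bool -> 'rV['F_2]_4,
      [/\ is_char_wed p q Lam,
          proj_equiv p q Lam true true lam,
          proj_equiv p q Lam false true (invS lam p S)
        & proj_equiv p q Lam true false (invS lam q T)])
  <-> Omega q S :&: Omega p T = set0.
Proof.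
have pq : p != q by apply: contraNneq hpq => ->.
split.
- case=> Lam [Lam_char H22 H12 H21].
  apply/(corner_char_iff hlam hS hT hpq).
  have sq_char := char_wed_of_mulmx (square_map_unique hlam hS hT hpq H22 H12 H21) Lam_char.
  have [M [_ _ Mker Mmu]] := square_map_projFF hlam hS hT hpq.
  by apply: (char_Pm_of_proj pq Mmu Mker _ sq_char); apply: leq_trans hm.
- move=> meet0; exists (square_map lam p q S T); split.
  + apply: (char_wed_of_proj pq) => -[] [].
    * by exists lam; [exact: square_map_projTT | ].
    * by exists (invS lam q T); [exact: square_map_projTF | exact: invS_char].
    * by exists (invS lam p S); [exact: square_map_projFT | exact: invS_char].
    * by exists (corner_map lam p q S T); [exact: square_map_projFF | exact/corner_char_iff].
  + exact: square_map_projTT.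
  + exact: square_map_projFT.
  + exact: square_map_projTF.
Qed.
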